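(* $$D_{\mathbb{R},3}\ge\frac{12^{2/3}}{5/2}\approx2.096.$$ This is witnessed by the $3$-homogeneous polynomial $P_3:\ell_\infty^6\to\mathbb{R}$, $P_3(x)=(x_1+x_2)(x_3^2+x_3x_4-x_4^2)+(x_1-x_2)(x_5^2+x_5x_6-x_6^2)$, which has $\|P_3\|=5/2$ and twelve nonzero coefficients, all of modulus $1$.
   Context: $\ell_\infty^n$ is $\mathbb{R}^n$ with the sup norm; for a polynomial $P$ on $\ell_\infty^n$, $\|P\|=\sup_{x\in[-1,1]^n}|P(x)|$. $D_{\mathbb{R},m}$ is the smallest constant $D$ such that for every $N$ and every real $m$-homogeneous polynomial $P(x)=\sum_{|\alpha|=m}a_\alpha x^\alpha$ on $\ell_\infty^N$, $\big(\sum_{|\alpha|=m}|a_\alpha|^{\frac{2m}{m+1}}\big)^{\frac{m+1}{2m}}\le D\|P\|$. *)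

From Stdlib Require Import Reals List.
Import ListNotations.
Open Scope R_scope.

Fixpoint mindices (N m : nat) : list (list nat) :=
  match N with
  | O => match m with O => [[]] | _ => [] end
  | S N' => flat_map (fun k => map (cons k) (mindices N' (m - k))) (seq 0 (S m))
  end.

Fixpoint monom (x : nat -> R) (i : nat) (alpha : list nat) : R :=
  match alpha with
  | [] => 1
  | k :: r => (x i ^ k) * monom x (S i) r
  end.

Definition hpoly (N m : nat) (a : list nat -> R) (x : nat -> R) : R :=
  fold_right Rplus 0 (map (fun al => a al * monom x 0 al) (mindices N m)).

Definition is_sup_norm (N m : nat) (a : list nat -> R) (nrm : R) : Prop :=
  is_lub (fun y => exists x : nat -> R,
             (forall i, (i < N)%nat -> -1 <= x i <= 1) /\ y = Rabs (hpoly N m a x))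
         nrm.

(* t^p for t >= 0, p > 0, with 0^p = 0 (Stdlib's Rpower is junk at 0). *)
Definition rpow (t p : R) : R := if Rle_dec t 0 then 0 else Rpower t p.

Definition coef_norm (N m : nat) (a : list nat -> R) : R :=
  let p := INR (2 * m) / INR (m + 1) in
  rpow (fold_right Rplus 0 (map (fun al => rpow (Rabs (a al)) p) (mindices N m)))
       (/ p).

Definition BH_constant (m : nat) (D : R) : Prop :=
  forall (N : nat) (a : list nat -> R) (nrm : R),
    is_sup_norm N m a nrm -> coef_norm N m a <= D * nrm.

From Stdlib Require Import Reals List Lra Psatz.
Import ListNotations.
Open Scope R_scope.

(* Any single polynomial P with sup norm ||P|| > 0 forces every admissible
   constant D to satisfy  coef_norm(P) / ||P|| <= D  (lemma [BH_lower_bound]).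
   We apply this to the 3-homogeneous polynomial on l_infty^6
     P3(x) = (x1 + x2) q(x3, x4) + (x1 - x2) q(x5, x6),  q(a, b) = a^2 + ab - b^2.
   - Its coefficient family [P3_coef] has twelve entries equal to +-1 and
     all others 0, so for the exponent 2m/(m+1) = 3/2 the coefficient norm
     is 12^(2/3) ([P3_coef_norm]); the identification of [hpoly] with P3 is
     a finite computation ([hpoly_P3]).
   - ||P3|| = 5/2: the bound comes from |q| <= 5/4 on [-1,1]^2 ([quad_bound])
     together with |s + t| + |s - t| <= 2 for s, t in [-1,1]
     ([abs_sum_diff_le]); it is attained at x = (1, 0, 1, 1/2, 1, 1/2). *)

Lemma BH_lower_bound (m N : nat) (a : list nat -> R) (nrm D : R) :
  0 < nrm -> is_sup_norm N m a nrm -> BH_constant m D ->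
  coef_norm N m a / nrm <= D.
Proof.
  intros Hpos Hnorm HD.
  pose proof (HD N a nrm Hnorm) as Hle.
  apply (Rmult_le_reg_r nrm); [exact Hpos|].
  unfold Rdiv. rewrite Rmult_assoc, Rinv_l; lra.
Qed.

Definition quad (a b : R) : R := a ^ 2 + a * b - b ^ 2.

(* The indefinite quadratic form q(a, b) = a^2 + ab - b^2 is bounded by 5/4
   on the square [-1,1]^2 (extremal at (1, 1/2) and (1/2, -1)). *)
Lemma quad_bound (a b : R) : -1 <= a <= 1 -> -1 <= b <= 1 ->
  Rabs (quad a b) <= 5 / 4.
Proof.
  intros Ha Hb. unfold quad. apply Rabs_le. split.
  - assert (Hsq : 0 <= (a + b / 2) ^ 2) by apply pow2_ge_0.
    assert (b * b <= 1) by nra. nra.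
  - assert (Hsq : 0 <= (b - a / 2) ^ 2) by apply pow2_ge_0.
    assert (a * a <= 1) by nra. nra.
Qed.

(* |s + t| + |s - t| = 2 max(|s|, |t|), hence at most 2 on [-1,1]^2. *)
Lemma abs_sum_diff_le (s t : R) : -1 <= s <= 1 -> -1 <= t <= 1 ->
  Rabs (s + t) + Rabs (s - t) <= 2.
Proof. intros Hs Ht. unfold Rabs; repeat destruct Rcase_abs; lra. Qed.

Lemma polarised_bound (s t u v c : R) :
  -1 <= s <= 1 -> -1 <= t <= 1 -> Rabs u <= c -> Rabs v <= c ->
  Rabs ((s + t) * u + (s - t) * v) <= 2 * c.
Proof.
  intros Hs Ht Hu Hv.
  pose proof (abs_sum_diff_le s t Hs Ht) as Hst.
  pose proof (Rabs_pos (s + t)). pose proof (Rabs_pos (s - t)).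
  eapply Rle_trans; [apply Rabs_triang|].
  rewrite !Rabs_mult.
  assert (Rabs (s + t) * Rabs u <= Rabs (s + t) * c)
    by (apply Rmult_le_compat_l; assumption).
  assert (Rabs (s - t) * Rabs v <= Rabs (s - t) * c)
    by (apply Rmult_le_compat_l; assumption).
  assert (0 <= c) by (eapply Rle_trans; [apply Rabs_pos | exact Hu]).
  nra.
Qed.

Definition P3 (x : nat -> R) : R :=
  (x 0%nat + x 1%nat) * quad (x 2%nat) (x 3%nat)
  + (x 0%nat - x 1%nat) * quad (x 4%nat) (x 5%nat).

Definition P3_coef (al : list nat) : R :=
  match al with
  | [1; 0; 2; 0; 0; 0]%nat => 1  | [1; 0; 1; 1; 0; 0]%nat => 1
  | [1; 0; 0; 2; 0; 0]%nat => -1 | [0; 1; 2; 0; 0; 0]%nat => 1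
  | [0; 1; 1; 1; 0; 0]%nat => 1  | [0; 1; 0; 2; 0; 0]%nat => -1
  | [1; 0; 0; 0; 2; 0]%nat => 1  | [1; 0; 0; 0; 1; 1]%nat => 1
  | [1; 0; 0; 0; 0; 2]%nat => -1 | [0; 1; 0; 0; 2; 0]%nat => -1
  | [0; 1; 0; 0; 1; 1]%nat => -1 | [0; 1; 0; 0; 0; 2]%nat => 1
  | _ => 0
  end.

Lemma hpoly_P3 (x : nat -> R) : hpoly 6 3 P3_coef x = P3 x.
Proof.
  unfold hpoly, P3, quad.
  cbv beta iota zeta delta [mindices seq flat_map map app Nat.sub fold_right
    monom P3_coef].
  ring.
Qed.

Lemma P3_bound (x : nat -> R) :
  (forall i, (i < 6)%nat -> -1 <= x i <= 1) -> Rabs (P3 x) <= 5 / 2.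
Proof.
  intros Hx. unfold P3.
  replace (5 / 2) with (2 * (5 / 4)) by lra.
  apply polarised_bound; try apply Hx; try lia; apply quad_bound; apply Hx; lia.
Qed.

Definition P3_peak (i : nat) : R :=
  match i with 0 => 1 | 2 => 1 | 3 => 1 / 2 | 4 => 1 | 5 => 1 / 2 | _ => 0 end.

Lemma P3_sup_norm : is_sup_norm 6 3 P3_coef (5 / 2).
Proof.
  split.
  - intros y [x [Hx ->]]. rewrite hpoly_P3. now apply P3_bound.
  - intros b Hb. apply Hb. exists P3_peak. split.
    + intros i Hi. destruct i as [|[|[|[|[|[|i]]]]]]; simpl; lra.
    + rewrite hpoly_P3. unfold P3, quad, P3_peak.
      rewrite Rabs_right; [field | lra].
Qed.

Lemma rpow_abs_0 (p : R) : rpow (Rabs 0) p = 0.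
Proof. rewrite Rabs_R0. unfold rpow. destruct Rle_dec; lra. Qed.

Lemma rpow_abs_1 (p : R) : rpow (Rabs 1) p = 1.
Proof.
  rewrite Rabs_R1. unfold rpow. destruct Rle_dec; [lra|].
  unfold Rpower. rewrite ln_1, Rmult_0_r. apply exp_0.
Qed.

Lemma rpow_abs_m1 (p : R) : rpow (Rabs (-1)) p = 1.
Proof. replace (-1) with (- (1)) by ring. rewrite Rabs_Ropp. apply rpow_abs_1. Qed.

Lemma P3_coef_norm : coef_norm 6 3 P3_coef = Rpower 12 (2 / 3).
Proof.
  unfold coef_norm.
  cbv beta iota zeta delta [mindices seq flat_map map app Nat.sub fold_right
    P3_coef].
  rewrite ?rpow_abs_0, ?rpow_abs_1, ?rpow_abs_m1.
  unfold rpow. destruct Rle_dec; [lra|].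
  f_equal; [lra|]. simpl. field.
Qed.

Theorem mainTheorem8 :
  forall D : R, BH_constant 3 D -> Rpower 12 (2 / 3) / (5 / 2) <= D.
Proof.
  intros D HD.
  rewrite <- P3_coef_norm.
  apply BH_lower_bound with (N := 6%nat); [lra | exact P3_sup_norm | exact HD].
Qed.
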